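(* Let $a_1,\dots,a_n>0$, $B>0$, and $\tilde{x}\in\mathbb{R}^n$ with $\sum_j a_j\tilde{x}_j\neq0$. Then $\pi_{\mathrm{PoS}}(\tilde{x})$ is an optimal solution of $$\min_{v\in\Delta_n}\ \frac{B}{2}\big\|v-P^F(\tilde{x})\big\|_1. \qquad (\ast)$$ Moreover, if $\sum_{j=1}^na_j\tilde{x}_j>0$, then $\pi_{\mathrm{BL}}(\tilde{x})$ is also an optimal solution of $(\ast)$.
   Context: $\Delta_n=\{v\in\mathbb{R}^n:v\ge0,\ \sum_iv_i=1\}$. For $y$ with $\sum_ja_jy_j\ne0$, $P^F(y)_i=\frac{a_iy_i}{\sum_{j=1}^na_jy_j}$. The projection-onto-simplex mechanism is $\pi_{\mathrm{PoS}}(\tilde{x})=\arg\min_{v\in\Delta_n}\|v-P^F(\tilde{x})\|_2$. The baseline mechanism is $\pi_{\mathrm{BL}}(\tilde{x})_i=\frac{a_i(\tilde{x}_i)_+}{\sum_{j=1}^na_j(\tilde{x}_j)_+}$, where $(y)_+=\max\{y,0\}$ (well-defined when some $\tilde{x}_j>0$, in particular when $\sum_ja_j\tilde{x}_j>0$). *)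

From HB Require Import structures.
From mathcomp Require Import all_boot all_order all_algebra.
From mathcomp Require Import reals.
Set Implicit Arguments. Unset Strict Implicit. Unset Printing Implicit Defensive.
Import Order.TTheory GRing.Theory Num.Theory.
Local Open Scope ring_scope.

Section Defs.
Variable R : realType.
Variable n : nat.

Definition in_simplex (v : 'I_n -> R) : Prop :=
  (forall i, 0 <= v i) /\ \sum_(i < n) v i = 1.

Definition PF (a y : 'I_n -> R) : 'I_n -> R :=
  fun i => a i * y i / \sum_(j < n) a j * y j.

Definition l2dist (v w : 'I_n -> R) : R :=
  Num.sqrt (\sum_(i < n) (v i - w i) ^+ 2).

Definition l1dist (v w : 'I_n -> R) : R :=
  \sum_(i < n) `|v i - w i|.

(* v is a (the) projection of P^F(x) onto Delta_n : v = pi_PoS(x) *)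
Definition is_PoS (a x v : 'I_n -> R) : Prop :=
  in_simplex v /\ forall w, in_simplex w -> l2dist v (PF a x) <= l2dist w (PF a x).

Definition piBL (a x : 'I_n -> R) : 'I_n -> R :=
  fun i => a i * Num.max (x i) 0 / \sum_(j < n) a j * Num.max (x j) 0.

Definition l1_optimal (B : R) (a x v : 'I_n -> R) : Prop :=
  in_simplex v /\
  forall w, in_simplex w -> B / 2 * l1dist v (PF a x) <= B / 2 * l1dist w (PF a x).

End Defs.

(* The Euclidean projection of p = P^F(x) onto the simplex is the thresholding
   v_i = (p_i - tau)_+ with tau >= 0 chosen so that the entries sum to 1; such a
   tau exists since tau |-> sum_i (p_i - tau)_+ is continuous, at least 1 at 0
   and eventually 0.  Because |w_i - p_i| >= |p_i| - w_i for w_i >= 0, every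
   point of the simplex has l1 distance at least sum_i |p_i| - 1 from p, with
   equality for the points satisfying 0 <= v_i <= (p_i)_+.  The projection and
   the baseline mechanism are both of this kind. *)
From HB Require Import structures.
From mathcomp Require Import all_boot all_order all_algebra.
From mathcomp Require Import reals.
From mathcomp Require Import classical_sets.
From mathcomp Require Import ring lra.
Set Implicit Arguments.
Unset Strict Implicit.
Unset Printing Implicit Defensive.
Import Order.TTheory GRing.Theory Num.Theory.
Local Open Scope ring_scope.

Section LevelAttained.
Variable R : realType.

(* An intermediate value theorem needing only a one-sided Lipschitz bound:
   the level c is attained at the supremum of [a <= t, c <= f t]. *)
Lemma lipschitz_level_attained (f : R -> R) (L c a M : R) :
  0 <= L -> (forall s t, s <= t -> f s <= f t + L * (t - s)) ->
  c <= f a -> (forall t, a <= t -> c <= f t -> t <= M) ->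
  exists t, a <= t /\ f t = c.
Proof.
move=> L0 flip fa bnd.
pose E : set R := fun t => a <= t /\ c <= f t.
have Ea : E a by [].
have hs : has_sup E by split; [exists a | exists M => t [a_t c_t]; exact: bnd].
set tau := sup E.
have tub t : E t -> t <= tau by move=> Et; exact: sup_upper_bound.
have atau : a <= tau by exact: tub.
set N := L + 1.
have N0 : 0 < N by rewrite /N; lra.
have mulN d : N * (d / N) = d by rewrite mulrCA divff ?mulr1 // gt_eqF.
have LN d : 0 < d -> L * (d / N) < d.
  move=> d0; rewrite -[ltRHS]mulN ltr_pM2r ?divr_gt0 //.
  by rewrite /N; lra.
exists tau; split => //; apply/eqP; rewrite eq_le; apply/andP; split.
- rewrite leNgt; apply/negP => hlt.
  have hL : L * ((f tau - c) / N) < f tau - c by apply: LN; lra.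
  have dN0 : 0 < (f tau - c) / N by apply: divr_gt0 => //; lra.
  have hf : f tau <= f (tau + (f tau - c) / N) + L * ((f tau - c) / N).
    by have := flip tau (tau + (f tau - c) / N); rewrite addrAC subrr add0r; apply; lra.
  have Et : E (tau + (f tau - c) / N) by split; lra.
  have := tub _ Et; lra.
- rewrite leNgt; apply/negP => hlt.
  have dN0 : 0 < (c - f tau) / N by apply: divr_gt0 => //; lra.
  have [t [a_t c_t] tt] := sup_adherent dN0 hs; rewrite -/tau in tt.
  have t_tau : t <= tau by exact: tub.
  have hL : L * (tau - t) < c - f tau.
    apply: le_lt_trans (LN _ _); first by rewrite ler_wpM2l //; lra.
    lra.
  have := flip t tau t_tau; lra.
Qed.

End LevelAttained.

Section SimplexProjection.
Variables (R : realType) (n : nat) (p : 'I_n -> R).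
Hypothesis sum_p : \sum_(i < n) p i = 1.

Definition threshold (tau : R) : 'I_n -> R := fun i => Num.max (p i - tau) 0.

Definition threshold_mass (tau : R) : R := \sum_(i < n) threshold tau i.

Lemma threshold_ge0 tau i : 0 <= threshold tau i.
Proof. by rewrite le_max lexx orbT. Qed.

Lemma threshold_mass_lipschitz s t :
  s <= t -> threshold_mass s <= threshold_mass t + n%:R * (t - s).
Proof.
move=> st; have -> : n%:R * (t - s) = \sum_(i < n) (t - s).
  by rewrite sumr_const card_ord mulr_natl.
rewrite /threshold_mass -big_split /=; apply: ler_sum => i _.
have h0 := threshold_ge0 t i; rewrite /threshold in h0 *.
have h1 : p i - t <= Num.max (p i - t) 0 by rewrite le_max lexx.
by rewrite ge_max; apply/andP; split; lra.
Qed.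

Lemma exists_threshold : exists tau, 0 <= tau /\ threshold_mass tau = 1.
Proof.
apply: (lipschitz_level_attained (M := \sum_(j < n) `|p j|) (ler0n _ n)
  threshold_mass_lipschitz).
  by rewrite -sum_p; apply: ler_sum => i _; rewrite /threshold subr0 le_max lexx.
move=> t _; apply: contra_leT => ht.
suff -> : threshold_mass t = 0 by rewrite ltr01.
apply: big1 => i _; apply: max_r.
have : 0 <= \sum_(j < n | j != i) `|p j| by apply: sumr_ge0.
have := ler_norm (p i); move: ht; rewrite (bigD1 i) //=; lra.
Qed.

Variable tau : R.
Hypotheses (tau_ge0 : 0 <= tau) (mass_tau : threshold_mass tau = 1).

Lemma threshold_simplex : in_simplex (threshold tau).
Proof. by split => // i; exact: threshold_ge0. Qed.

Lemma threshold_le_pos i : threshold tau i <= Num.max (p i) 0.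
Proof. by rewrite /threshold ge_max !le_max lexx !orbT andbT lerBlDr lerDl tau_ge0. Qed.

(* Pythagoras for the obtuse angle at the projection: v - p + tau is zero where
   v_i > 0 and nonnegative where v_i = 0, while w - v has total mass 0. *)
Lemma threshold_sqdist w : in_simplex w ->
  \sum_(i < n) (threshold tau i - p i) ^+ 2 + \sum_(i < n) (w i - threshold tau i) ^+ 2
  <= \sum_(i < n) (w i - p i) ^+ 2.
Proof.
move=> [w_ge0 sum_w]; set v := threshold tau.
have : 0 <= \sum_(i < n)
  ((w i - p i) ^+ 2 - (v i - p i) ^+ 2 - (w i - v i) ^+ 2 + 2 * tau * (w i - v i)).
  apply: sumr_ge0 => i _.
  have -> : (w i - p i) ^+ 2 - (v i - p i) ^+ 2 - (w i - v i) ^+ 2 + 2 * tau * (w i - v i)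
    = 2 * (w i - v i) * (v i - p i + tau) by ring.
  rewrite /v /threshold; case: (lerP 0 (p i - tau)) => hi.
    by rewrite (_ : p i - tau - p i + tau = 0) ?mulr0 //; ring.
  rewrite subr0 !mulr_ge0 ?w_ge0 //.
  by rewrite sub0r addrC subr_ge0 -subr_le0 ltW.
rewrite big_split /= !sumrB -mulr_sumr sumrB sum_w [\sum_(i < n) v i]mass_tau subrr mulr0 addr0.
lra.
Qed.

Lemma threshold_l2_min w : in_simplex w ->
  l2dist (threshold tau) p <= l2dist w p.
Proof.
move=> ws; rewrite /l2dist ler_sqrt; last by apply: sumr_ge0 => i _; exact: sqr_ge0.
have := threshold_sqdist ws.
have : 0 <= \sum_(i < n) (w i - threshold tau i) ^+ 2.
  by apply: sumr_ge0 => i _; exact: sqr_ge0.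
lra.
Qed.

Lemma l2_min_threshold w : in_simplex w ->
  l2dist w p <= l2dist (threshold tau) p -> forall i, w i = threshold tau i.
Proof.
move=> ws; rewrite /l2dist ler_sqrt; last by apply: sumr_ge0 => i _; exact: sqr_ge0.
move=> wmin i; have := threshold_sqdist ws => hsq.
have : \sum_(j < n) (w j - threshold tau j) ^+ 2 == 0.
  by rewrite eq_le sumr_ge0 ?andbT => [|j _]; [lra | exact: sqr_ge0].
rewrite psumr_eq0 => [/allP/(_ i (mem_index_enum _))|j _]; last exact: sqr_ge0.
by rewrite /= sqrf_eq0 subr_eq0 => /eqP.
Qed.

End SimplexProjection.

Section L1Distance.
Variables (R : realType) (n : nat).
Implicit Types a p v w x y : 'I_n -> R.

Lemma l1dist_simplex_ge p w :
  in_simplex w -> \sum_(i < n) `|p i| - 1 <= l1dist w p.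
Proof.
move=> [w_ge0 <-]; rewrite -sumrB; apply: ler_sum => i _.
by rewrite distrC; have := lerB_normD (p i) (- w i); rewrite normrN (ger0_norm (w_ge0 i)).
Qed.

Lemma l1dist_simplex_le_pos p v : in_simplex v ->
  (forall i, v i <= Num.max (p i) 0) -> l1dist v p = \sum_(i < n) `|p i| - 1.
Proof.
move=> [v_ge0 sum_v] v_le; rewrite -sum_v -sumrB; apply: eq_bigr => i _.
have := v_le i; have := v_ge0 i.
case: (lerP 0 (p i)) => hp; rewrite ?(max_l hp) ?(max_r (ltW hp)) => v0 vp.
  by rewrite ler0_norm ?subr_le0 // (ger0_norm hp) opprB.
have -> : v i = 0 by apply/eqP; rewrite eq_le vp v0.
by rewrite sub0r normrN subr0.
Qed.

Lemma l1_optimal_le_pos (B : R) a x v : 0 <= B -> in_simplex v ->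
  (forall i, v i <= Num.max (PF a x i) 0) -> l1_optimal B a x v.
Proof.
move=> B0 vs v_le; split => // w ws; rewrite ler_wpM2l ?divr_ge0 //.
by rewrite (l1dist_simplex_le_pos vs v_le) l1dist_simplex_ge.
Qed.

Lemma sum_PF a y : \sum_(j < n) a j * y j != 0 -> \sum_(i < n) PF a y i = 1.
Proof. by move=> h; rewrite -mulr_suml divff. Qed.

End L1Distance.

Section Baseline.
Variables (R : realType) (n : nat) (a x : 'I_n -> R).
Hypotheses (a_gt0 : forall i, 0 < a i) (Sx_gt0 : 0 < \sum_(j < n) a j * x j).

Lemma baseline_denom_ge :
  \sum_(j < n) a j * x j <= \sum_(j < n) a j * Num.max (x j) 0.
Proof.
apply: ler_sum => i _.
by apply: ler_wpM2l; [exact: ltW | rewrite le_max lexx].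
Qed.

Lemma baseline_denom_gt0 : 0 < \sum_(j < n) a j * Num.max (x j) 0.
Proof. exact: lt_le_trans Sx_gt0 baseline_denom_ge. Qed.

(* piBL a x is P^F evaluated at the positive part of x. *)
Lemma piBL_simplex : in_simplex (piBL a x).
Proof.
split; last exact: (sum_PF (lt0r_neq0 baseline_denom_gt0)).
move=> i; apply: divr_ge0; last exact: ltW baseline_denom_gt0.
by apply: mulr_ge0; [exact: ltW | rewrite le_max lexx orbT].
Qed.

Lemma piBL_le_pos i : piBL a x i <= Num.max (PF a x i) 0.
Proof.
rewrite /piBL /PF le_max.
case: (lerP 0 (x i)) => hxi; last by rewrite mulr0 mul0r lexx orbT.
apply/orP; left; apply: ler_wpM2l; first by rewrite mulr_ge0 // ltW.
by rewrite lef_pV2 ?posrE ?baseline_denom_gt0 // baseline_denom_ge.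
Qed.

End Baseline.

Theorem theorem3 (R : realType) (n : nat) (a : 'I_n -> R) (B : R) (x : 'I_n -> R)
  (ha : forall i, 0 < a i) (hB : 0 < B)
  (hx : \sum_(j < n) a j * x j != 0) :
  (exists v, is_PoS a x v) /\
  (forall v, is_PoS a x v -> l1_optimal B a x v) /\
  (0 < \sum_(j < n) a j * x j -> l1_optimal B a x (piBL a x)).
Proof.
have sumP := sum_PF hx.
have [tau [tau_ge0 mass_tau]] := exists_threshold sumP.
have B0 : 0 <= B by exact: ltW.
split; [|split].
- by exists (threshold (PF a x) tau); split;
    [exact: threshold_simplex | exact: threshold_l2_min].
- move=> v [vs vmin]; apply: l1_optimal_le_pos => // i.
  rewrite (l2_min_threshold mass_tau vs (vmin _ (threshold_simplex mass_tau))).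
  exact: threshold_le_pos.
- move=> Sx; apply: l1_optimal_le_pos => //; first exact: piBL_simplex.
  by move=> i; exact: piBL_le_pos.
Qed.
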